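(* Let $f,g,h$ satisfy the hypotheses of either (I) or (II) below, and define for $x\neq y$ in $(0,1]$ $$L(x,y)=\frac{(f(x)^2-f(y)^2)(g(x)^2-g(y)^2)(h(x)+h(y))^2}{(f(x)g(x)h(x)-f(y)g(y)h(y))^2}.$$ Then $L(x,y)\ge 16\,\beta(f,g,h)$ for all $x\neq y$ in $(0,1]$. (I): $(f,g)$ and $(f,h)$ are CLI monotone pairs and $1+\frac{G(y)-G(x)}{F(y)-F(x)}\le \frac{H(y)-H(x)}{F(y)-F(x)}$ for all $x<y$. (II): $(f,g)$ is a CLI monotone pair, $(f,h)$ is a CLI anti-monotone pair and $1+\frac{G(y)-G(x)}{F(y)-F(x)}+\frac{H(y)-H(x)}{F(y)-F(x)}\ge 0$ for all $x<y$.
   Context: $f,g,h$ are nonnegative continuous functions on $[0,1]$, differentiable on $(0,1)$, positive on $(0,1]$; $F=\log f$, $G=\log g$, $H=\log h$, with $F'(x)\neq0$ on $(0,1)$ and $F(x)\ne F(y)$ for $x\ne y$. A pair $(f,g)$ is a CLI monotone pair if (a) $(f(x)-f(y))(g(x)-g(y))\ge 0$ for all $x,y\in[0,1]$ and (b) $0\le \inf_{0<x<1}G'(x)/F'(x)\le\sup_{0<x<1}G'(x)/F'(x)<\infty$; it is a CLI anti-monotone pair if (a) $(f(x)-f(y))(g(x)-g(y))\le 0$ for all $x,y$ and (b) $-\infty<\inf_{0<x<1}G'(x)/F'(x)\le\sup_{0<x<1}G'(x)/F'(x)\le 0$ (analogously for $(f,h)$ with $H$ in place of $G$). With $m=\inf_{0<x<1}G'/F'$,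 $M=\sup_{0<x<1}G'/F'$, $n=\inf_{0<x<1}H'/F'$, $N=\sup_{0<x<1}H'/F'$, $$\beta(f,g,h)=\min\Big\{\frac{m}{(1+m+n)^2},\frac{m}{(1+m+N)^2},\frac{M}{(1+M+n)^2},\frac{M}{(1+M+N)^2}\Big\}.$$ *)

From Stdlib Require Import Reals Lra.
Open Scope R_scope.

(* Logarithms F = log f, etc. *)
Definition Lg (f : R -> R) : R -> R := fun x => ln (f x).

Definition is_inf (S : R -> Prop) (m : R) : Prop :=
  (forall r, S r -> m <= r) /\ (forall b, (forall r, S r -> b <= r) -> b <= m).
Definition is_sup (S : R -> Prop) (M : R) : Prop := is_lub S M.

Definition ratio_set (dF dG : R -> R) : R -> Prop :=
  fun r => exists x, 0 < x < 1 /\ r = dG x / dF x.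

Definition standing (f dF : R -> R) : Prop :=
  (forall x, 0 <= x <= 1 -> limit1_in f (fun t => 0 <= t <= 1) (f x) x) /\
  (forall x, 0 < x < 1 -> exists l, derivable_pt_lim f x l) /\
  (forall x, 0 <= x <= 1 -> 0 <= f x) /\
  (forall x, 0 < x <= 1 -> 0 < f x) /\
  (forall x, 0 < x < 1 -> derivable_pt_lim (Lg f) x (dF x)).

Definition CLI_monotone (f g dF dG : R -> R) : Prop :=
  (forall x y, 0 <= x <= 1 -> 0 <= y <= 1 -> (f x - f y) * (g x - g y) >= 0) /\
  exists m M, is_inf (ratio_set dF dG) m /\ is_sup (ratio_set dF dG) M /\
              0 <= m /\ m <= M.

Definition CLI_antimonotone (f g dF dG : R -> R) : Prop :=
  (forall x y, 0 <= x <= 1 -> 0 <= y <= 1 -> (f x - f y) * (g x - g y) <= 0) /\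
  exists m M, is_inf (ratio_set dF dG) m /\ is_sup (ratio_set dF dG) M /\
              m <= M /\ M <= 0.

Definition beta (m M n N : R) : R :=
  Rmin (Rmin (m / (1 + m + n) ^ 2) (m / (1 + m + N) ^ 2))
       (Rmin (M / (1 + M + n) ^ 2) (M / (1 + M + N) ^ 2)).

Definition Lfun (f g h : R -> R) (x y : R) : R :=
  ((f x ^ 2 - f y ^ 2) * (g x ^ 2 - g y ^ 2) * (h x + h y) ^ 2)
  / (f x * g x * h x - f y * g y * h y) ^ 2.

From Stdlib Require Import Reals Lra.
From Coquelicot Require Import Coquelicot.
Open Scope R_scope.

(* Fix x < y in (0,1] and put t = F(y) - F(x), r = (G(y) - G(x))/t and
   s = (H(y) - H(x))/t.  Then f, g, h grow by the factors e^t, e^(rt), e^(st)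
   between x and y, so L(x,y) depends only on (t, r, s), and in hyperbolic form
     L(x,y) = 4 sinh t sinh(rt) cosh(st/2)^2 / sinh((1+r+s)t/2)^2.
   The file proceeds in four steps.
   1. Hyperbolic inequalities: sinh u/u increases and tanh u/u decreases on
      [0,+oo); with the identity sinh t sinh(rt) = sinh(pt)^2 - sinh(qt)^2,
      p = (1+r)/2, q = (1-r)/2, they give L >= 16 r/(1+r+s)^2 whenever r >= 0,
      1+r+s > 0 and s lies outside (0, 1+r)  (Lred_bound).
   2. By Cauchy's mean value theorem r and s are values of G'/F' and H'/F',
      hence r in [m,M], s in [n,N]; hypothesis (I) or (II) puts s outside (0,1+r).
   3. r/(1+r+s)^2 is quasi-concave in r and 1/(1+r+s)^2 quasi-convex in s,
      so it is at least beta(m,M,n,N)  (beta_le_ratio).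
   4. The theorem combines these, after reducing to x < y by symmetry of L. *)

Lemma sinh_opp x : sinh (- x) = - sinh x.
Proof. unfold sinh. rewrite Ropp_involutive. lra. Qed.

Lemma cosh_opp x : cosh (- x) = cosh x.
Proof. unfold cosh. rewrite Ropp_involutive. lra. Qed.

Lemma sinh_add x y : sinh (x + y) = sinh x * cosh y + cosh x * sinh y.
Proof. unfold sinh, cosh. rewrite Ropp_plus_distr, !exp_plus. field. Qed.

Lemma sinh_mul_sinh x y : sinh (x + y) * sinh (x - y) = sinh x ^ 2 - sinh y ^ 2.
Proof.
  unfold sinh, Rminus. rewrite !Ropp_plus_distr, !exp_plus, !Ropp_involutive, !exp_Ropp.
  assert (0 < exp x) by apply exp_pos. assert (0 < exp y) by apply exp_pos.
  field; lra.
Qed.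

Lemma sinh_nonneg x : 0 <= x -> 0 <= sinh x.
Proof.
  intros [Hx|<-]; [|rewrite sinh_0; lra].
  rewrite <- sinh_0. left. now apply sinh_lt.
Qed.

Lemma sinh_neq_0 x : x <> 0 -> sinh x <> 0.
Proof.
  intros Hx. rewrite <- sinh_0.
  destruct (Rlt_or_le x 0) as [H|H];
    [pose proof (sinh_lt _ _ H) | pose proof (sinh_lt 0 x ltac:(lra))]; lra.
Qed.

Lemma cosh_le u v : 0 <= u <= v -> cosh u <= cosh v.
Proof.
  intros [Hu [Huv|<-]]; [|lra].
  destruct (MVT_cor2 cosh sinh u v Huv) as [c [Hc Hcuv]].
  { intros c _. apply derivable_pt_lim_cosh. }
  assert (0 <= sinh c) by (apply sinh_nonneg; lra).
  assert (0 <= sinh c * (v - u)) by (apply Rmult_le_pos; lra).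
  lra.
Qed.

(* sinh u / u is nondecreasing on [0, +oo), in cross-multiplied form. *)
Lemma sinh_ratio_le a b x : 0 <= a <= b -> 0 <= x -> b * sinh (a * x) <= a * sinh (b * x).
Proof.
  intros Hab [Hx|<-]; [|rewrite !Rmult_0_r, sinh_0; lra].
  destruct (MVT_cor2 (fun z => a * sinh (b * z) - b * sinh (a * z))
              (fun z => a * b * (cosh (b * z) - cosh (a * z))) 0 x Hx) as [c [Hc Hcx]].
  { intros c _. apply is_derive_Reals. unfold sinh, cosh. auto_derive; auto.
    change RinvImpl.Rinv with Rinv. field. }
  rewrite !Rmult_0_r, sinh_0 in Hc.
  assert (cosh (a * c) <= cosh (b * c)) by (apply cosh_le; split; nra).
  assert (0 <= a * b * (cosh (b * c) - cosh (a * c)) * (x - 0))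
    by (apply Rmult_le_pos; [apply Rmult_le_pos|]; nra).
  lra.
Qed.

(* tanh u / u is nonincreasing on [0, +oo), in cross-multiplied form. *)
Lemma tanh_ratio_le a b x : 0 <= a <= b -> 0 <= x ->
  a * sinh (b * x) * cosh (a * x) <= b * sinh (a * x) * cosh (b * x).
Proof.
  intros Hab [Hx|<-]; [|rewrite !Rmult_0_r, sinh_0; lra].
  destruct (MVT_cor2 (fun z => b * sinh (a * z) * cosh (b * z) - a * sinh (b * z) * cosh (a * z))
              (fun z => (b * b - a * a) * sinh (a * z) * sinh (b * z)) 0 x Hx) as [c [Hc Hcx]].
  { intros c _. apply is_derive_Reals. unfold sinh, cosh. auto_derive; auto.
    change RinvImpl.Rinv with Rinv. field. }
  rewrite !Rmult_0_r, sinh_0 in Hc.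
  assert (0 <= sinh (a * c)) by (apply sinh_nonneg; nra).
  assert (0 <= sinh (b * c)) by (apply sinh_nonneg; nra).
  assert (0 <= (b * b - a * a) * sinh (a * c) * sinh (b * c) * (x - 0))
    by (apply Rmult_le_pos; [apply Rmult_le_pos; [apply Rmult_le_pos|]|]; nra).
  lra.
Qed.

Lemma sinh_ratio_sq a b x : Rabs a <= b -> 0 <= x ->
  b ^ 2 * sinh (a * x) ^ 2 <= a ^ 2 * sinh (b * x) ^ 2.
Proof.
  intros Hab Hx.
  assert (Habs : sinh (a * x) ^ 2 = sinh (Rabs a * x) ^ 2 /\ a ^ 2 = Rabs a ^ 2).
  { unfold Rabs; destruct (Rcase_abs a); [|tauto].
    replace (- a * x) with (- (a * x)) by ring. rewrite sinh_opp. split; ring. }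
  destruct Habs as [-> ->].
  assert (H := sinh_ratio_le (Rabs a) b x (conj (Rabs_pos a) Hab) Hx).
  assert (0 <= sinh (Rabs a * x)) by (apply sinh_nonneg, Rmult_le_pos; [apply Rabs_pos|lra]).
  assert (0 <= b) by (pose proof (Rabs_pos a); lra).
  assert (Hbs : 0 <= b * sinh (Rabs a * x)) by (apply Rmult_le_pos; lra).
  assert (Hsq := pow_incr _ _ 2 (conj Hbs H)).
  rewrite !Rpow_mult_distr in Hsq. exact Hsq.
Qed.

(* p sinh((p+sigma)x) <= (p+sigma) sinh(px) cosh(sigma x) when sigma >= p or -p <= sigma <= 0;
   by the addition formula this compares tanh(px)/p with tanh(sigma x)/sigma. *)
Lemma sinh_shift_le p sigma x : 0 < p -> (p <= sigma \/ - p <= sigma <= 0) -> 0 <= x ->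
  p * sinh ((p + sigma) * x) <= (p + sigma) * sinh (p * x) * cosh (sigma * x).
Proof.
  intros Hp Hsigma Hx. rewrite Rmult_plus_distr_r, sinh_add.
  enough (p * cosh (p * x) * sinh (sigma * x) <= sigma * sinh (p * x) * cosh (sigma * x)) by lra.
  destruct Hsigma as [Hsigma|Hsigma].
  - pose proof (tanh_ratio_le p sigma x ltac:(lra) Hx). lra.
  - pose proof (tanh_ratio_le (- sigma) p x ltac:(lra) Hx) as H.
    replace (- sigma * x) with (- (sigma * x)) in H by ring.
    rewrite sinh_opp, cosh_opp in H. lra.
Qed.

(* The hyperbolic inequality behind the proposition, for t > 0.  With p = (1+r)/2,
   q = (1-r)/2, sigma = s/2 we have sinh t sinh(rt) = sinh(pt)^2 - sinh(qt)^2, r = p^2 - q^2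
   and 1 + r + s = 2(p + sigma); conclude with sinh_shift_le and sinh_ratio_sq. *)
Lemma sinh_key_pos t r s : 0 < t -> 0 <= r -> 0 < 1 + r + s -> (1 + r <= s \/ s <= 0) ->
  4 * r * sinh ((1 + r + s) * t / 2) ^ 2
    <= sinh t * sinh (r * t) * cosh (s * t / 2) ^ 2 * (1 + r + s) ^ 2.
Proof.
  intros Ht Hr Hk Hcase.
  set (p := (1 + r) / 2). set (q := (1 - r) / 2). set (sigma := s / 2).
  assert (Hp : 0 < p) by (unfold p; lra).
  assert (Eprod : sinh t * sinh (r * t) = sinh (p * t) ^ 2 - sinh (q * t) ^ 2).
  { rewrite <- sinh_mul_sinh. f_equal; f_equal; unfold p, q; field. }
  replace ((1 + r + s) * t / 2) with ((p + sigma) * t) by (unfold p, sigma; field).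
  replace (s * t / 2) with (sigma * t) by (unfold sigma; field).
  replace (1 + r + s) with (2 * (p + sigma)) by (unfold p, sigma; field).
  replace r with (p ^ 2 - q ^ 2) at 1 by (unfold p, q; field).
  rewrite Eprod.
  set (A := sinh (p * t)). set (B := sinh (q * t)). set (C := cosh (sigma * t)).
  set (D := sinh ((p + sigma) * t)).
  assert (Hshift : p * D <= (p + sigma) * A * C).
  { apply sinh_shift_le; [exact Hp | | lra]. unfold p, sigma; lra. }
  assert (HD : 0 <= D) by (apply sinh_nonneg, Rmult_le_pos; unfold p, sigma; lra).
  assert (HpD : (p * D) ^ 2 <= ((p + sigma) * A * C) ^ 2)
    by (apply pow_incr; split; [apply Rmult_le_pos|]; lra).
  assert (Hratio : p ^ 2 * B ^ 2 <= q ^ 2 * A ^ 2).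
  { apply sinh_ratio_sq; [apply Rabs_le; unfold p, q; lra | lra]. }
  assert (Hr' : 0 <= p ^ 2 - q ^ 2) by (unfold p, q; nra).
  apply Rmult_le_reg_l with (p ^ 2); [nra|].
  assert (HC : 0 <= (2 * (p + sigma)) ^ 2 * C ^ 2) by (apply Rmult_le_pos; apply pow2_ge_0).
  apply Rle_trans with ((p ^ 2 - q ^ 2) * A ^ 2 * ((2 * (p + sigma)) ^ 2 * C ^ 2)).
  - assert (H4 := Rmult_le_compat_l (4 * (p ^ 2 - q ^ 2)) _ _ ltac:(lra) HpD). nra.
  - assert (H5 := Rmult_le_compat_r ((2 * (p + sigma)) ^ 2 * C ^ 2) _ _ HC Hratio). nra.
Qed.

(* Both sides of the inequality are even in t. *)
Lemma sinh_key t r s : t <> 0 -> 0 <= r -> 0 < 1 + r + s -> (1 + r <= s \/ s <= 0) ->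
  4 * r * sinh ((1 + r + s) * t / 2) ^ 2
    <= sinh t * sinh (r * t) * cosh (s * t / 2) ^ 2 * (1 + r + s) ^ 2.
Proof.
  intros Ht Hr Hk Hcase. destruct (Rlt_or_le 0 t) as [Hpos|Hneg].
  - now apply sinh_key_pos.
  - pose proof (sinh_key_pos (- t) r s ltac:(lra) Hr Hk Hcase) as H.
    replace ((1 + r + s) * - t / 2) with (- ((1 + r + s) * t / 2)) in H by field.
    replace (r * - t) with (- (r * t)) in H by ring.
    replace (s * - t / 2) with (- (s * t / 2)) in H by field.
    rewrite !sinh_opp, cosh_opp in H. lra.
Qed.

(* The value of L when log f, log g, log h increase by t, r t, s t. *)
Definition Lred (t r s : R) : R :=
  ((exp t ^ 2 - 1) * (exp (r * t) ^ 2 - 1) * (exp (s * t) + 1) ^ 2)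
  / (exp t * exp (r * t) * exp (s * t) - 1) ^ 2.

(* Hyperbolic form of Lred: the factor e^((1+r+s)t) cancels. *)
Lemma Lred_hyperbolic t r s : (1 + r + s) * t <> 0 ->
  Lred t r s = 4 * (sinh t * sinh (r * t) * cosh (s * t / 2) ^ 2)
               / sinh ((1 + r + s) * t / 2) ^ 2.
Proof.
  intros Hkt. unfold Lred.
  assert (EZ : exp (s * t) = exp (s * t / 2) ^ 2).
  { simpl. rewrite Rmult_1_r, <- exp_plus. f_equal. field. }
  assert (EV : exp t * exp (r * t) * exp (s * t / 2) ^ 2 = exp ((1 + r + s) * t / 2) ^ 2).
  { simpl. rewrite !Rmult_1_r, <- !exp_plus. f_equal. field. }
  assert (HV1 : exp ((1 + r + s) * t / 2) <> 1).
  { intro E. apply Hkt.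
    replace ((1 + r + s) * t) with (2 * ((1 + r + s) * t / 2)) by field.
    rewrite (exp_inv ((1 + r + s) * t / 2) 0) by now rewrite exp_0. ring. }
  rewrite EZ. unfold sinh, cosh. rewrite !exp_Ropp.
  pose proof (exp_pos t). pose proof (exp_pos (r * t)). pose proof (exp_pos (s * t / 2)).
  pose proof (exp_pos ((1 + r + s) * t / 2)).
  set (X := exp t) in *. set (Y := exp (r * t)) in *. set (W := exp (s * t / 2)) in *.
  set (V := exp ((1 + r + s) * t / 2)) in *.
  assert (V ^ 2 - 1 <> 0) by (intro E; apply HV1; nra).
  replace ((X ^ 2 - 1) * (Y ^ 2 - 1) * (W ^ 2 + 1) ^ 2) with
    (16 * (X * Y * W ^ 2) * ((X - / X) / 2 * ((Y - / Y) / 2) * ((W + / W) / 2) ^ 2))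
    by (field; lra).
  rewrite EV. field. lra.
Qed.

Lemma Lred_bound t r s : t <> 0 -> 0 <= r -> 0 < 1 + r + s -> (1 + r <= s \/ s <= 0) ->
  16 * (r / (1 + r + s) ^ 2) <= Lred t r s.
Proof.
  intros Ht Hr Hk Hcase.
  assert (Hkt : (1 + r + s) * t <> 0) by (apply Rmult_integral_contrapositive_currified; lra).
  rewrite (Lred_hyperbolic t r s Hkt).
  assert (Hsinh : sinh ((1 + r + s) * t / 2) <> 0).
  { apply sinh_neq_0. intro E. apply Hkt.
    replace ((1 + r + s) * t) with (2 * ((1 + r + s) * t / 2)) by field. rewrite E. ring. }
  assert (HS := pow2_gt_0 _ Hsinh).
  assert (HK : 0 < (1 + r + s) ^ 2) by (apply pow_lt; lra).
  pose proof (sinh_key t r s Ht Hr Hk Hcase) as Hkey.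
  set (S := sinh ((1 + r + s) * t / 2) ^ 2) in *.
  set (P := sinh t * sinh (r * t) * cosh (s * t / 2) ^ 2) in *.
  set (K := (1 + r + s) ^ 2) in *.
  replace (16 * (r / K)) with (4 * (4 * r * S) / (K * S)) by (field; lra).
  replace (4 * P / S) with (4 * (P * K) / (K * S)) by (field; lra).
  apply Rmult_le_compat_r; [left; apply Rinv_0_lt_compat, Rmult_lt_0_compat; assumption | lra].
Qed.

(* In Stdlib a / 0 = 0, so the degenerate terms of beta vanish. *)
Lemma div_sq0 a : a / 0 ^ 2 = 0.
Proof. unfold Rdiv. simpl. rewrite Rmult_0_l, Rinv_0. ring. Qed.

Lemma div_lt_cross a b x y : 0 < x -> 0 < y -> a / x < b / y -> a * y < b * x.
Proof.
  intros Hx Hy H.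
  replace (a * y) with (a / x * (x * y)) by (field; lra).
  replace (b * x) with (b / y * (x * y)) by (field; lra).
  apply Rmult_lt_compat_r; [apply Rmult_lt_0_compat|]; assumption.
Qed.

Lemma quasi_concave_ratio c m r M : 0 <= r -> m <= r <= M -> c + r <> 0 ->
  Rmin (m / (c + m) ^ 2) (M / (c + M) ^ 2) <= r / (c + r) ^ 2.
Proof.
  intros Hr [Hmr HrM] Hcr.
  assert (HR : 0 < (c + r) ^ 2) by now apply pow2_gt_0.
  assert (Hphi : 0 <= r / (c + r) ^ 2) by (apply Rdiv_le_0_compat; lra).
  destruct (Req_dec (c + m) 0) as [E|Hcm].
  { rewrite E, div_sq0. eapply Rle_trans; [apply Rmin_l | lra]. }
  destruct (Req_dec (c + M) 0) as [E|HcM].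
  { rewrite E, div_sq0. eapply Rle_trans; [apply Rmin_r | lra]. }
  assert (Hm2 : 0 < (c + m) ^ 2) by now apply pow2_gt_0.
  assert (HM2 : 0 < (c + M) ^ 2) by now apply pow2_gt_0.
  destruct (Rle_or_lt (m / (c + m) ^ 2) (r / (c + r) ^ 2)) as [L|Lm].
  { eapply Rle_trans; [apply Rmin_l | exact L]. }
  destruct (Rle_or_lt (M / (c + M) ^ 2) (r / (c + r) ^ 2)) as [L|LM].
  { eapply Rle_trans; [apply Rmin_r | exact L]. }
  exfalso.
  (* cross-multiplied: phi(r) < phi(m) means (r - m)(c^2 - r m) < 0, so c^2 < r m;
     phi(r) < phi(M) means (M - r)(c^2 - r M) > 0, so c^2 > r M >= r m. *)
  apply div_lt_cross in Lm; [|exact HR|exact Hm2].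
  apply div_lt_cross in LM; [|exact HR|exact HM2].
  assert (Em : (r - m) * (c ^ 2 - r * m) < 0) by nra.
  assert (EM : 0 < (M - r) * (c ^ 2 - r * M)) by nra.
  assert (Hm' : c ^ 2 < r * m).
  { destruct (Rlt_or_le (c ^ 2) (r * m)) as [H|H]; [exact H|].
    assert (0 <= (r - m) * (c ^ 2 - r * m)) by (apply Rmult_le_pos; lra). lra. }
  assert (HM' : r * M < c ^ 2).
  { destruct (Rlt_or_le (r * M) (c ^ 2)) as [H|H]; [exact H|].
    assert ((M - r) * (c ^ 2 - r * M) <= 0) by (apply Rmult_le_0_l; lra). lra. }
  nra.
Qed.

Lemma sq_le_endpoint c n s N : n <= s <= N -> (c + s) ^ 2 <= (c + n) ^ 2 \/ (c + s) ^ 2 <= (c + N) ^ 2.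
Proof.
  intros Hs. destruct (Rle_or_lt ((c + s) ^ 2) ((c + n) ^ 2)) as [H|Hn]; [now left|].
  right.
  assert (Hpos : 0 < 2 * c + s + n).
  { destruct (Rlt_or_le 0 (2 * c + s + n)) as [H|H]; [exact H|].
    assert ((s - n) * (2 * c + s + n) <= 0) by (apply Rmult_le_0_l; lra). nra. }
  assert (0 <= (N - s) * (2 * c + s + N)) by (apply Rmult_le_pos; lra). nra.
Qed.

Lemma beta_column m M q r s : 0 <= r -> m <= r <= M -> 1 + r + s <> 0 ->
  (1 + r + s) ^ 2 <= (1 + r + q) ^ 2 ->
  Rmin (m / (1 + m + q) ^ 2) (M / (1 + M + q) ^ 2) <= r / (1 + r + s) ^ 2.
Proof.
  intros Hr Hrange Hk Hsq.
  assert (Hk2 := pow2_gt_0 _ Hk).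
  assert (Hq : (1 + q) + r <> 0).
  { intro E. replace (1 + r + q) with ((1 + q) + r) in Hsq by ring. rewrite E in Hsq. simpl in Hsq. lra. }
  pose proof (quasi_concave_ratio (1 + q) m r M Hr Hrange Hq) as Hqc.
  replace ((1 + q) + m) with (1 + m + q) in Hqc by ring.
  replace ((1 + q) + M) with (1 + M + q) in Hqc by ring.
  replace ((1 + q) + r) with (1 + r + q) in Hqc by ring.
  eapply Rle_trans; [exact Hqc|].
  apply Rmult_le_compat_l; [exact Hr|]. apply Rinv_le_contravar; assumption.
Qed.

Lemma beta_le_ratio m M n N r s : m <= r <= M -> n <= s <= N -> 0 <= r -> 1 + r + s <> 0 ->
  beta m M n N <= r / (1 + r + s) ^ 2.
Proof.
  intros Hr Hs Hr0 Hk. unfold beta.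
  destruct (sq_le_endpoint (1 + r) n s N Hs) as [Hsq|Hsq].
  - eapply Rle_trans; [|exact (beta_column m M n r s Hr0 Hr Hk Hsq)].
    apply Rmin_glb.
    + eapply Rle_trans; [apply Rmin_l | apply Rmin_l].
    + eapply Rle_trans; [apply Rmin_r | apply Rmin_l].
  - eapply Rle_trans; [|exact (beta_column m M N r s Hr0 Hr Hk Hsq)].
    apply Rmin_glb.
    + eapply Rle_trans; [apply Rmin_l | apply Rmin_r].
    + eapply Rle_trans; [apply Rmin_r | apply Rmin_r].
Qed.

Definition log_slope (f u : R -> R) (x y : R) : R :=
  (Lg u y - Lg u x) / (Lg f y - Lg f x).

(* Freezing log u to the right of b, z |-> log u(min z b), gives a function that is
   two-sidedly continuous on (0, b], as the mean value theorem of Stdlib requires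
   even when b = 1. *)
Lemma clamp_continuous u du b c : standing u du -> 0 < c <= b -> b <= 1 ->
  continuity_pt (fun z => Lg u (Rmin z b)) c.
Proof.
  intros [Hcont [_ [_ [Hpos _]]]] Hcb Hb.
  assert (Hclamp : continuity_pt (fun z => u (Rmin z b)) c).
  { intros eps Heps.
    destruct (Hcont c ltac:(lra) eps Heps) as [alp [Halp Hlim]].
    exists (Rmin alp c). split; [now apply Rmin_pos|].
    intros z [_ Hz]. simpl in Hz |- *. unfold R_dist in *.
    assert (Hza : Rabs (z - c) < alp) by (eapply Rlt_le_trans; [exact Hz | apply Rmin_l]).
    assert (Hzc : Rabs (z - c) < c) by (eapply Rlt_le_trans; [exact Hz | apply Rmin_r]).
    apply Rabs_def2 in Hza. apply Rabs_def2 in Hzc.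
    rewrite (Rmin_left c b) by lra.
    apply Hlim. simpl. unfold R_dist.
    unfold Rmin; destruct (Rle_dec z b); split; try apply Rabs_def1; lra. }
  apply (continuity_pt_comp (fun z => u (Rmin z b)) ln c Hclamp).
  apply derivable_continuous_pt. exists (/ u (Rmin c b)).
  apply derivable_pt_lim_ln, Hpos. rewrite Rmin_left; lra.
Qed.

Lemma clamp_derivative u du b c : standing u du -> 0 < c < b -> b <= 1 ->
  derivable_pt_lim (fun z => Lg u (Rmin z b)) c (du c).
Proof.
  intros [_ [_ [_ [_ Hd]]]] Hcb Hb.
  apply (derivable_pt_lim_locally_ext (Lg u) _ c 0 b); [lra | | apply Hd; lra].
  intros z Hz. now rewrite Rmin_left by lra.
Qed.

(* Step 2 (Cauchy mean value theorem): a chord slope (U(b)-U(a))/(F(b)-F(a)) is a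
   value U'(c)/F'(c) with c in (a, b). *)
Lemma log_slope_in_ratio_set f u df du a b : standing f df -> standing u du ->
  (forall x, 0 < x < 1 -> df x <> 0) -> 0 < a < b -> b <= 1 -> Lg f b - Lg f a <> 0 ->
  ratio_set df du (log_slope f u a b).
Proof.
  intros Sf Su Hdf Hab Hb Hne.
  set (F := fun z => Lg f (Rmin z b)). set (U := fun z => Lg u (Rmin z b)).
  assert (DF : forall c, a < c < b -> derivable_pt_lim F c (df c))
    by (intros c Hc; apply (clamp_derivative f df); [exact Sf | lra | lra]).
  assert (DU : forall c, a < c < b -> derivable_pt_lim U c (du c))
    by (intros c Hc; apply (clamp_derivative u du); [exact Su | lra | lra]).
  destruct (MVT F U a b (fun c Hc => exist _ _ (DF c Hc)) (fun c Hc => exist _ _ (DU c Hc)))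
    as [c [Hc Hmvt]]; [lra | intros c Hc; apply (clamp_continuous f df); [exact Sf | lra | lra]
                           | intros c Hc; apply (clamp_continuous u du); [exact Su | lra | lra] |].
  simpl in Hmvt. unfold F, U in Hmvt. rewrite (Rmin_left b b), (Rmin_left a b) in Hmvt by lra.
  exists c. split; [lra|].
  assert (df c <> 0) by (apply Hdf; lra).
  unfold log_slope. field_simplify_eq; auto. lra.
Qed.

Lemma Lfun_sym f g h x y : Lfun f g h x y = Lfun f g h y x.
Proof. unfold Lfun. f_equal; ring. Qed.

Lemma Lfun_scaling f g h a b X Y Z :
  f a <> 0 -> g a <> 0 -> h a <> 0 ->
  f b = f a * X -> g b = g a * Y -> h b = h a * Z -> X * Y * Z <> 1 ->
  Lfun f g h a b = ((X ^ 2 - 1) * (Y ^ 2 - 1) * (Z + 1) ^ 2) / (X * Y * Z - 1) ^ 2.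
Proof.
  intros Hf Hg Hh Ef Eg Eh HXYZ. unfold Lfun. rewrite Ef, Eg, Eh.
  assert (HXYZ' : X * Y * Z - 1 <> 0) by (intro E; apply HXYZ; lra).
  assert (HXYZ'' : 1 - X * Y * Z <> 0) by (intro E; apply HXYZ; lra).
  field. split; [exact HXYZ'|].
  replace (f a * g a * h a - f a * X * (g a * Y) * (h a * Z))
    with (f a * g a * h a * (1 - X * Y * Z)) by ring.
  repeat apply Rmult_integral_contrapositive_currified; assumption.
Qed.

Lemma exp_log_step u a b : 0 < u a -> 0 < u b -> u b = u a * exp (Lg u b - Lg u a).
Proof.
  intros Ha Hb. unfold Lg, Rminus. rewrite exp_plus, exp_Ropp, !exp_ln by assumption.
  field. lra.
Qed.

Lemma log_slope_step f u a b : Lg f b - Lg f a <> 0 ->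
  Lg u b - Lg u a = log_slope f u a b * (Lg f b - Lg f a).
Proof. intros Ht. unfold log_slope. field. exact Ht. Qed.

Section ChordForm.
Variables (f g h : R -> R) (a b : R).
Hypotheses (Hfa : 0 < f a) (Hfb : 0 < f b) (Hga : 0 < g a) (Hgb : 0 < g b)
           (Hha : 0 < h a) (Hhb : 0 < h b).
Hypothesis Ht : Lg f b - Lg f a <> 0.
Hypothesis Hprod : f a * g a * h a - f b * g b * h b <> 0.

Lemma chord_step u : 0 < u a -> 0 < u b ->
  u b = u a * exp (log_slope f u a b * (Lg f b - Lg f a)).
Proof. intros Hua Hub. rewrite <- log_slope_step by exact Ht. now apply exp_log_step. Qed.

Lemma chord_exp_neq_1 :
  exp (Lg f b - Lg f a) * exp (log_slope f g a b * (Lg f b - Lg f a))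
    * exp (log_slope f h a b * (Lg f b - Lg f a)) <> 1.
Proof.
  intros E. apply Hprod.
  rewrite (exp_log_step f a b), (chord_step g), (chord_step h) by assumption.
  replace (f a * exp (Lg f b - Lg f a) * (g a * exp (log_slope f g a b * (Lg f b - Lg f a)))
             * (h a * exp (log_slope f h a b * (Lg f b - Lg f a))))
    with (f a * g a * h a * (exp (Lg f b - Lg f a) * exp (log_slope f g a b * (Lg f b - Lg f a))
             * exp (log_slope f h a b * (Lg f b - Lg f a)))) by ring.
  rewrite E. ring.
Qed.

Lemma log_slopes_sum_neq_0 : 1 + log_slope f g a b + log_slope f h a b <> 0.
Proof.
  intros E. apply chord_exp_neq_1. rewrite <- !exp_plus, <- exp_0. f_equal.
  replace (Lg f b - Lg f a + log_slope f g a b * (Lg f b - Lg f a)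
             + log_slope f h a b * (Lg f b - Lg f a))
    with ((1 + log_slope f g a b + log_slope f h a b) * (Lg f b - Lg f a)) by ring.
  rewrite E. ring.
Qed.

Lemma Lfun_log_form :
  Lfun f g h a b = Lred (Lg f b - Lg f a) (log_slope f g a b) (log_slope f h a b).
Proof.
  unfold Lred. apply Lfun_scaling; try lra.
  - now apply exp_log_step.
  - now apply chord_step.
  - now apply chord_step.
  - exact chord_exp_neq_1.
Qed.
End ChordForm.

Definition condition_I (f g h dF dG dH : R -> R) : Prop :=
  CLI_monotone f g dF dG /\ CLI_monotone f h dF dH /\
  forall x y, 0 < x <= 1 -> 0 < y <= 1 -> x < y -> 1 + log_slope f g x y <= log_slope f h x y.

Definition condition_II (f g h dF dG dH : R -> R) : Prop :=
  CLI_monotone f g dF dG /\ CLI_antimonotone f h dF dH /\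
  forall x y, 0 < x <= 1 -> 0 < y <= 1 -> x < y -> 1 + log_slope f g x y + log_slope f h x y >= 0.

(* Under (I) or (II), the slopes r, s of a chord satisfy the hypotheses of Lred_bound
   (up to 1 + r + s <> 0): r >= 0 since inf G'/F' >= 0, and s lies outside (0, 1 + r). *)
Lemma slope_constraints f g h dF dG dH a b :
  condition_I f g h dF dG dH \/ condition_II f g h dF dG dH ->
  0 < a -> a < b -> b <= 1 ->
  ratio_set dF dG (log_slope f g a b) -> ratio_set dF dH (log_slope f h a b) ->
  0 <= log_slope f g a b /\ 0 <= 1 + log_slope f g a b + log_slope f h a b /\
  (1 + log_slope f g a b <= log_slope f h a b \/ log_slope f h a b <= 0).
Proof.
  intros Hcase Ha Hab Hb Rr Rs.
  destruct Hcase as [[[_ (m' & _ & Hm' & _ & Hm0 & _)] [_ Hslope]]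
                   | [[_ (m' & _ & Hm' & _ & Hm0 & _)] [[_ (_ & N' & _ & HN' & _ & HN0)] Hslope]]];
    specialize (Hslope a b ltac:(lra) ltac:(lra) Hab);
    assert (Hr : m' <= log_slope f g a b) by exact (proj1 Hm' _ Rr).
  - repeat split; lra.
  - assert (log_slope f h a b <= N') by exact (proj1 HN' _ Rs).
    repeat split; lra.
Qed.

Theorem proposition4p1 (f g h dF dG dH : R -> R) (m M n N : R) :
  standing f dF -> standing g dG -> standing h dH ->
  (forall x, 0 < x < 1 -> dF x <> 0) ->
  (forall x y, 0 < x <= 1 -> 0 < y <= 1 -> x <> y -> Lg f x <> Lg f y) ->
  is_inf (ratio_set dF dG) m -> is_sup (ratio_set dF dG) M ->
  is_inf (ratio_set dF dH) n -> is_sup (ratio_set dF dH) N ->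
  ( (* (I) *)
    (CLI_monotone f g dF dG /\ CLI_monotone f h dF dH /\
     forall x y, 0 < x <= 1 -> 0 < y <= 1 -> x < y ->
       1 + (Lg g y - Lg g x) / (Lg f y - Lg f x)
         <= (Lg h y - Lg h x) / (Lg f y - Lg f x))
  \/ (* (II) *)
    (CLI_monotone f g dF dG /\ CLI_antimonotone f h dF dH /\
     forall x y, 0 < x <= 1 -> 0 < y <= 1 -> x < y ->
       1 + (Lg g y - Lg g x) / (Lg f y - Lg f x)
         + (Lg h y - Lg h x) / (Lg f y - Lg f x) >= 0) ) ->
  forall x y, 0 < x <= 1 -> 0 < y <= 1 -> x <> y ->
    f x * g x * h x - f y * g y * h y <> 0 ->
    Lfun f g h x y >= 16 * beta m M n N.
Proof.
  intros Sf Sg Sh HdF Hinj Hm HM Hn HN Hcase.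
  assert (Hordered : forall a b, 0 < a <= 1 -> 0 < b <= 1 -> a < b ->
            f a * g a * h a - f b * g b * h b <> 0 -> Lfun f g h a b >= 16 * beta m M n N).
  { intros a b Ha Hb Hab Hprod.
    assert (Ht : Lg f b - Lg f a <> 0) by (intro E; apply (Hinj a b); lra).
    pose proof (log_slope_in_ratio_set f g dF dG a b Sf Sg HdF ltac:(lra) ltac:(lra) Ht) as Rr.
    pose proof (log_slope_in_ratio_set f h dF dH a b Sf Sh HdF ltac:(lra) ltac:(lra) Ht) as Rs.
    destruct (slope_constraints f g h dF dG dH a b Hcase ltac:(lra) Hab ltac:(lra) Rr Rs)
      as (Hr0 & Hk0 & Hcond).
    assert (Hpos : forall u du z, standing u du -> 0 < z <= 1 -> 0 < u z)
      by (intros u du z Su Hz; apply Su, Hz).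
    assert (Hk : 1 + log_slope f g a b + log_slope f h a b <> 0)
      by (apply log_slopes_sum_neq_0; eauto).
    rewrite Lfun_log_form by eauto.
    apply Rle_ge, Rle_trans with (16 * (log_slope f g a b
                                        / (1 + log_slope f g a b + log_slope f h a b) ^ 2)).
    - apply Rmult_le_compat_l; [lra|].
      apply beta_le_ratio; [split; [exact (proj1 Hm _ Rr) | exact (proj1 HM _ Rr)]
                           | split; [exact (proj1 Hn _ Rs) | exact (proj1 HN _ Rs)] | exact Hr0 | exact Hk].
    - apply Lred_bound; auto. destruct (Rle_lt_or_eq _ _ Hk0); [assumption | congruence]. }
  intros x y Hx Hy Hxy Hprod. destruct (Rlt_or_le x y) as [Hlt | Hle].
  - now apply Hordered.
  - rewrite Lfun_sym. apply Hordered; lra.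
Qed.
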